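(* No monoid admitting a non-trivial idempotent (an element $e$ with $e^2=e\neq 1_M$) is strongly sofic.
   Context: Hamming metric on $\operatorname{Map}(D)$ (monoid of maps $D\to D$, $D$ finite non-empty): $d_D^{\mathrm{Ham}}(f,g)=\frac{1}{|D|}|\{v:f(v)\ne g(v)\}|$. A monoid $M$ is strongly sofic if for every finite $K\subset M$ there is an integer $\Delta_K\ge1$ such that for every $\varepsilon>0$ there exist a non-empty finite set $D$ and a map $\sigma\colon M\to\operatorname{Map}(D)$ with (1) $\sigma(1_M)=\mathrm{Id}_D$; (2) $d_D^{\mathrm{Ham}}(\sigma(k_1k_2),\sigma(k_1)\sigma(k_2))\le\varepsilon$ for $k_1,k_2\in K$; (3) $d_D^{\mathrm{Ham}}(\sigma(k_1),\sigma(k_2))\ge1-\varepsilon$ for distinct $k_1,k_2\in K$; (4) $|\sigma(k)^{-1}(v)|\le\Delta_K$ for $k\in K$, $v\in D$. *)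

From mathcomp Require Import all_boot.
From Stdlib Require Import Reals.
Set Implicit Arguments. Unset Strict Implicit. Unset Printing Implicit Defensive.

Record monoid := Monoid {
  mcarrier :> Type;
  mmul : mcarrier -> mcarrier -> mcarrier;
  mone : mcarrier;
  mmulA : forall x y z, mmul x (mmul y z) = mmul (mmul x y) z;
  mmul1 : forall x, mmul mone x = x;
  mmulr1 : forall x, mmul x mone = x }.

Definition hamming (D : finType) (f g : D -> D) : R :=
  (INR #|[set v | f v != g v]| / INR #|D|)%R.

(* Strongly sofic monoid. Finite subsets K of M are given as finite lists. *)
Definition strongly_sofic (M : monoid) : Prop :=
  forall K : list M, exists DeltaK : nat, (1 <= DeltaK)%N /\
    forall eps : R, (0 < eps)%R ->
      exists (D : finType) (sigma : M -> (D -> D)),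
        (0 < #|D|)%N /\
        sigma (mone M) = (fun v : D => v) /\
        (forall k1 k2, List.In k1 K -> List.In k2 K ->
           (hamming (sigma (mmul k1 k2)) (sigma k1 \o sigma k2) <= eps)%R) /\
        (forall k1 k2, List.In k1 K -> List.In k2 K -> k1 <> k2 ->
           (1 - eps <= hamming (sigma k1) (sigma k2))%R) /\
        (forall k, List.In k K -> forall v : D,
           (#|[set u | sigma k u == v]| <= DeltaK)%N).

(* If [sigma e] is eps-close to [sigma e \o sigma e], then for all but eps|D|
   points v the image [sigma e v] is a fixed point of [sigma e]; as fibres of
   [sigma e] have at most Delta points, [sigma e] has at least
   (1 - eps)|D| / Delta fixed points.  But [sigma e] is (1 - eps)-far from
   [sigma 1 = id], so it has at most eps|D| fixed points, which is absurd once
   eps < 1 / (Delta + 1). *)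
From mathcomp Require Import all_boot.
From Stdlib Require Import Reals Lra.

Set Implicit Arguments. Unset Strict Implicit. Unset Printing Implicit Defensive.

Definition agreement (D : finType) (f g : D -> D) : {set D} :=
  [set v | f v == g v].

Lemma hammingE (D : finType) (f g : D -> D) : (0 < #|D|)%N ->
  hamming f g = (1 - INR #|agreement f g| / INR #|D|)%R.
Proof.
move=> D_gt0; have n_gt0 : (0 < INR #|D|)%R by apply/lt_0_INR/ltP.
rewrite /hamming.
have -> : [set v | f v != g v] = ~: agreement f g by apply/setP=> v; rewrite !inE.
have card_split := f_equal INR (cardsC (agreement f g)).
rewrite plus_INR in card_split.
have -> : INR #|~: agreement f g| = (INR #|D| - INR #|agreement f g|)%R by lra.
by field; lra.
Qed.

Lemma card_agreement_comp_le (D : finType) (s : D -> D) (d : nat) :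
  (forall v, #|[set u | s u == v]| <= d)%N ->
  (#|agreement s (s \o s)| <= d * #|agreement (fun v => v) s|)%N.
Proof.
move=> fibre_le.
rewrite -sum1_card (partition_big s (mem (agreement (fun v => v) s))); last first.
  by move=> v; rewrite !inE => /eqP {1}->.
rewrite mulnC -sum_nat_const; apply: leq_sum => w _.
rewrite sum1_card; apply: leq_trans (fibre_le w); apply: subset_leq_card.
by apply/subsetP=> u; rewrite !inE => /andP[].
Qed.

Lemma hamming_comp_self_le (D : finType) (s : D -> D) (d : nat) :
  (0 < #|D|)%N -> (forall v, #|[set u | s u == v]| <= d)%N ->
  (1 - hamming s (s \o s) <= INR d * (1 - hamming (fun v => v) s))%R.
Proof.
move=> D_gt0 fibre_le; rewrite !hammingE //.
have n_gt0 : (0 < INR #|D|)%R by apply/lt_0_INR/ltP.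
have /leP/le_INR := card_agreement_comp_le fibre_le; rewrite mult_INR => card_le.
apply: (Rmult_le_reg_r (INR #|D|)) => //.
by field_simplify; lra.
Qed.

Theorem proposition3p14 (M : monoid) :
  (exists e : M, mmul e e = e /\ e <> mone M) -> ~ strongly_sofic M.
Proof.
move=> [e [ee ne]] sofic.
have [d [_ approx]] := sofic [:: mone M; e].
have d_ge0 := pos_INR d.
set eps := (/ (INR d + 2))%R.
have eps_gt0 : (0 < eps)%R by apply: Rinv_0_lt_compat; lra.
have eps_d : (eps * (INR d + 2) = 1)%R by rewrite /eps; field; lra.
have [D [s [D_gt0 [s1 [s_mul [s_sep s_fibre]]]]]] := approx _ eps_gt0.
have Ke : List.In e [:: mone M; e] by right; left.
have := s_mul e e Ke Ke; rewrite ee => near_idem.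
have := s_sep _ _ (or_introl erefl) Ke (nesym ne); rewrite s1 => far_from_id.
have := hamming_comp_self_le D_gt0 (s_fibre e Ke).
nra.
Qed.
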